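(* Let $\mathbb{F}$ be a field of characteristic zero, $d\ge 2$, $n=2d-2$, $P_n=\mathbb{F}[x_1,\dots,x_n]$ and $I_n=\big(x_1^2,\dots,x_n^2,(x_1+\cdots+x_n)^2\big)$; let $\mathrm{in}(I_n)$ be its initial ideal with respect to the reverse lexicographic order. If $\mu\in P_n$ is a monomial with $\deg(\mu)\le d-2$ and $\mu\notin\mathrm{in}(I_n)$, then there exists a monomial $\widetilde{\mu}\in P_n$ which is a multiple of $\mu$, with $\deg(\widetilde\mu)=d-1$ and $\widetilde\mu\notin\mathrm{in}(I_n)$.
   Context: The reverse lexicographic order is taken with $x_1>x_2>\cdots>x_n$. *)

From HB Require Import structures.
From mathcomp Require Import all_boot all_order all_algebra.
From mathcomp Require Import mpoly.
Set Implicit Arguments. Unset Strict Implicit. Unset Printing Implicit Defensive.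
Import Order.TTheory GRing.Theory.
Local Open Scope ring_scope.

Section InitialIdeal.
Variables (F : fieldType) (n : nat).
Local Notation P := {mpoly F[n]}.

Definition revlex_lt (m1 m2 : 'X_{1..n}) : Prop :=
  (mdeg m1 < mdeg m2)%N \/
  (mdeg m1 = mdeg m2 /\
   exists i : 'I_n, (m2 i < m1 i)%N /\ forall j : 'I_n, (i < j)%N -> m1 j = m2 j).

Definition is_lead_mono (f : P) (m : 'X_{1..n}) : Prop :=
  m \in msupp f /\ forall m', m' \in msupp f -> m' = m \/ revlex_lt m' m.

Definition in_ideal_gen (S : P -> Prop) (p : P) : Prop :=
  exists (k : nat) (c g : 'I_k -> P), (forall i, S (g i)) /\ p = \sum_(i < k) c i * g i.

Definition initial_ideal (I : P -> Prop) : P -> Prop :=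
  in_ideal_gen (fun q => exists (f : P) (m : 'X_{1..n}),
                  I f /\ f != 0 /\ is_lead_mono f m /\ q = 'X_[m]).

Definition ideal_In : P -> Prop := fun p =>
  exists (g : 'I_n -> P) (h : P),
    p = \sum_(i < n) g i * 'X_i ^+ 2 + h * (\sum_(i < n) 'X_i) ^+ 2.

End InitialIdeal.

From HB Require Import structures.
From mathcomp Require Import all_boot all_order all_algebra.
From mathcomp Require Import mpoly.
From mathcomp Require Import zify.
Import Order.TTheory GRing.Theory.
Local Open Scope ring_scope.

(* Squares of variables lie in I_n, so mu is squarefree. If x_1, ..., x_t carry j > (t+1)/2
   variables of mu, let V consist of all variables except the x_i (i <= t) absent from mu: at
   most j - 2 are omitted, so (sum_{i in V} x_i)^j lies in I_n, and the restriction of mu to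
   x_1, ..., x_t is the leading monomial of its squarefree part. Hence mu is a squarefree ballot
   monomial, and adding the last variable absent from it keeps it so up to degree d - 1 = n/2.
   Finally a squarefree ballot monomial x^S of degree at most n/2 is not in in(I_n): fix the
   variables of S and send the k-th variable absent from S to minus the (k+1)-st variable of S.
   This maps x_1 + ... + x_n to a single variable, so the coefficient of x^S after the
   substitution is a linear form vanishing on I_n, equal to 1 at x^S and to 0 at every smaller
   monomial. *)

Section Multinomials.
Context {n : nat}.
Implicit Types (m u T : 'X_{1..n}) (t : nat).

Lemma revlex_ltD2l u m1 m2 : revlex_lt m1 m2 -> revlex_lt (u + m1)%MM (u + m2)%MM.
Proof.
case=> [lt_deg | [eq_deg [i [lt_i eq_above]]]].
  by left; rewrite !mdegD ltn_add2l.
right; split; first by rewrite !mdegD eq_deg.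
exists i; split; first by rewrite !mnmDE ltn_add2l.
by move=> j /eq_above; rewrite !mnmDE => ->.
Qed.

Lemma last_diff {m1 m2} : m1 != m2 ->
  exists i : 'I_n, m1 i != m2 i /\ forall j : 'I_n, (i < j)%N -> m1 j = m2 j.
Proof.
move=> ne; have [i0 ne_i0] : exists i, m1 i != m2 i.
  apply/existsP; apply: contraR ne => /existsPn eq_all.
  by apply/eqP/mnmP => i; apply/eqP/negPn.
have [i ne_i max_i] := @arg_maxnP _ i0 (fun i => m1 i != m2 i) val ne_i0.
exists i; split=> // j lt_ij; apply/eqP; apply: contraTT lt_ij.
by move=> /max_i; rewrite -leqNgt.
Qed.

Lemma mdeg_lt_lepm {m T} : (m <= T)%MM -> m != T -> (mdeg m < mdeg T)%N.
Proof.
move=> le_mT ne; rewrite -(submK le_mT) mdegD addnC -addn1 leq_add2l lt0n.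
by rewrite mdeg_eq0; apply: contra ne => /eqP eq0; rewrite -(submK le_mT) eq0 add0m.
Qed.

Lemma revlex_lt_dominated {m T} t : m != T -> mdeg m = mdeg T ->
  (forall i : 'I_n, (t <= i)%N -> T i = 0%N) ->
  (forall i : 'I_n, (i < t)%N -> (m i <= T i)%N) -> revlex_lt m T.
Proof.
move=> ne eq_deg T_tail m_head; right; split=> //.
have [i [ne_i eq_above]] := last_diff ne.
exists i; split=> //; have [lt_it|le_ti] := ltnP i t; last first.
  by move: ne_i; rewrite T_tail // lt0n.
have le_mT : (m <= T)%MM.
  apply/mnm_lepP => j; have [lt_ij|le_ji] := ltnP i j; first by rewrite eq_above.
  exact/m_head/(leq_ltn_trans le_ji).
by have := mdeg_lt_lepm le_mT ne; rewrite eq_deg ltnn.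
Qed.

Definition msqfree m := [forall i, (m i <= 1)%N].

Lemma msqfree01 {m} : msqfree m -> forall i, m i = 0%N \/ m i = 1%N.
Proof. by move/forallP=> sq i; move: (sq i); case: (m i) => [|[|]]; auto. Qed.

Definition mcompl m := [multinom (1 - m i)%N | i < n].

Lemma mcomplE m i : mcompl m i = (1 - m i)%N.
Proof. exact: mnmE. Qed.

Lemma msqfree_compl m : msqfree (mcompl m).
Proof. by apply/forallP => i; rewrite mcomplE leq_subr. Qed.

Definition prefix_deg m t := (\sum_(l < t) nth 0%N m l)%N.

Definition ballot m := forall t, (2 * prefix_deg m t <= t.+1)%N.

Lemma nth_mnm m (i : 'I_n) : nth 0%N m i = m i.
Proof. by rewrite -tnth_nth. Qed.

Lemma nth_mnm_default m l : (n <= l)%N -> nth 0%N m l = 0%N.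
Proof. by move=> le_nl; rewrite nth_default // size_tuple. Qed.

Lemma prefix_deg0 m : prefix_deg m 0 = 0%N.
Proof. exact: big_ord0. Qed.

Lemma prefix_degS m t : prefix_deg m t.+1 = (prefix_deg m t + nth 0%N m t)%N.
Proof. exact: big_ord_recr. Qed.

Lemma prefix_degE m t : prefix_deg m t = (\sum_(i < n | (i < t)%N) m i)%N.
Proof.
rewrite /prefix_deg (big_ord_widen (t + n) (nth 0%N m)) ?leq_addr //.
rewrite (eq_bigr (fun i : 'I_n => nth 0%N m i)) => [|i _]; last by rewrite nth_mnm.
rewrite [RHS](big_ord_widen_cond (t + n) (fun l => (l < t)%N) (nth 0%N m)) ?leq_addl //.
rewrite [RHS]big_mkcondr /=; apply: eq_bigr => l _.
by case: ltnP => // /nth_mnm_default ->.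
Qed.

Lemma prefix_deg_mdeg m : prefix_deg m n = mdeg m.
Proof. by rewrite prefix_degE mdegE; apply: eq_bigl => i; rewrite ltn_ord. Qed.

Lemma prefix_deg_full m t : (forall i : 'I_n, (t <= i)%N -> m i = 0%N) ->
  prefix_deg m t = mdeg m.
Proof.
move=> tail0; rewrite prefix_degE mdegE [RHS](bigID (fun i : 'I_n => (i < t)%N)) /=.
by rewrite [X in (_ + X)%N]big1 ?addn0 // => i; rewrite -leqNgt => /tail0.
Qed.

Lemma leq_prefix_deg m {t1 t2} : (t1 <= t2)%N -> (prefix_deg m t1 <= prefix_deg m t2)%N.
Proof.
move/subnK <-; elim: (t2 - t1)%N => // k IH.
by rewrite addSn prefix_degS (leq_trans IH) ?leq_addr.
Qed.

Lemma prefix_deg_ltS {m} {a : 'I_n} {t} : m a != 0%N -> (a < t)%N ->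
  (prefix_deg m a < prefix_deg m t)%N.
Proof.
move=> m_a lt_at; apply: (leq_trans _ (leq_prefix_deg m lt_at)).
by rewrite prefix_degS nth_mnm -addn1 leq_add2l lt0n.
Qed.

Lemma prefix_deg_inj m (a b : 'I_n) : m a != 0%N -> m b != 0%N ->
  prefix_deg m a = prefix_deg m b -> a = b.
Proof.
move=> m_a m_b eq_ab; apply: val_inj; case: (ltngtP a b) => // [lt_ab|lt_ba].
  by have := prefix_deg_ltS m_a lt_ab; rewrite eq_ab ltnn.
by have := prefix_deg_ltS m_b lt_ba; rewrite eq_ab ltnn.
Qed.

Lemma nth_mnm_compl m l : msqfree m ->
  (nth 0%N m l + nth 0%N (mcompl m) l = (l < n))%N.
Proof.
move=> sq; case: (ltnP l n) => [lt_ln|le_nl]; last by rewrite !nth_mnm_default.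
rewrite -[l]/(val (Ordinal lt_ln)) !nth_mnm mcomplE.
by case: (msqfree01 sq (Ordinal lt_ln)) => ->.
Qed.

Lemma prefix_deg_compl m t : msqfree m ->
  (prefix_deg m t + prefix_deg (mcompl m) t = minn t n)%N.
Proof.
move=> sq; elim: t => [|t IH]; first by rewrite !prefix_deg0 min0n.
by rewrite !prefix_degS addnACA IH nth_mnm_compl //; lia.
Qed.

Lemma mdeg_compl m : msqfree m -> (mdeg m + mdeg (mcompl m) = n)%N.
Proof. by move=> sq; rewrite -[RHS]minnn -(prefix_deg_compl m) // !prefix_deg_mdeg. Qed.

Lemma prefix_deg_attained m v : msqfree m -> (v < mdeg m)%N ->
  exists i : 'I_n, m i = 1%N /\ prefix_deg m i = v.
Proof.
move=> sq; rewrite -prefix_deg_mdeg.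
suff attained t : (v < prefix_deg m t)%N ->
    exists l, [/\ (l < t)%N, nth 0%N m l = 1%N & prefix_deg m l = v].
  by case/attained => l [lt_ln m_l pre_l]; exists (Ordinal lt_ln); rewrite -nth_mnm.
elim: t => [|t IH]; first by rewrite prefix_deg0.
rewrite prefix_degS; case: (ltnP v (prefix_deg m t)) => [/IH [l [lt_lt m_l pre_l]] _|].
  by exists l; split=> //; apply: ltnW.
case: (ltnP t n) => [lt_tn|/nth_mnm_default -> ]; last by rewrite addn0; lia.
have := msqfree01 sq (Ordinal lt_tn); rewrite -nth_mnm /= => m_t le_pre lt_v.
by exists t; split=> //; lia.
Qed.

Lemma prefix_degD m1 m2 t :
  prefix_deg (m1 + m2)%MM t = (prefix_deg m1 t + prefix_deg m2 t)%N.
Proof.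
by rewrite !prefix_degE -big_split; apply: eq_bigr => i _; rewrite mnmDE.
Qed.

Lemma prefix_deg1 (i : 'I_n) t : prefix_deg U_(i) t = (i < t)%N.
Proof.
rewrite prefix_degE; case: ltnP => [lt_it|le_ti].
  rewrite (bigD1 i) //= mnm1E eqxx big1 // => j /andP [_ /negbTE].
  by rewrite mnm1E eq_sym => ->.
rewrite big1 // => j lt_jt; rewrite mnm1E; case: eqP => // eq_ij.
by move: le_ti; rewrite eq_ij leqNgt lt_jt.
Qed.

(* Add the last variable absent from m: all variables after it are present, so beyond it
   the prefix degrees are determined by the total degree. *)
Lemma ballot_extend1 m : msqfree m -> ballot m -> (2 * (mdeg m).+1 <= n.+1)%N ->
  exists m', [/\ (m <= m')%MM, msqfree m', ballot m' & mdeg m' = (mdeg m).+1].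
Proof.
move=> sq bal deg_half.
have [i0 [compl_i0 _]] : exists i : 'I_n, mcompl m i = 1%N /\ prefix_deg (mcompl m) i = 0%N.
  by apply: prefix_deg_attained; rewrite ?msqfree_compl //; have := mdeg_compl m sq; lia.
have [i compl_i last_i] :=
  @arg_maxnP _ i0 (fun i => mcompl m i == 1%N) val (introT eqP compl_i0).
have m_i : m i = 0%N by move: compl_i; rewrite mcomplE; case: (msqfree01 sq i) => ->.
set m' := (m + U_(i))%MM.
have m'E j : m' j = if i == j then 1%N else m j.
  by rewrite mnmDE mnm1E; case: eqP => [<-|_]; rewrite ?m_i ?addn0.
have sq' : msqfree m'.
  by apply/forallP => j; rewrite m'E; case: eqP => // _; case: (msqfree01 sq j) => ->.
exists m'; split=> //; first exact: lem_addr; last by rewrite mdegD mdeg1 addn1.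
move=> t; rewrite prefix_degD prefix_deg1; case: ltnP => [lt_it|_]; last first.
  by rewrite addn0; apply: bal.
have := prefix_deg_compl m' t sq'; rewrite prefix_degD prefix_deg1 lt_it.
rewrite [prefix_deg (mcompl m') t]prefix_deg_full /= => [|j le_tj]; last first.
  rewrite mcomplE m'E; case: eqP => // ne_ij; apply/eqP; rewrite subn_eq0 lt0n.
  apply: contraTN (leq_trans lt_it le_tj); rewrite -leqNgt => m_j.
  by apply: last_i; rewrite mcomplE (eqP m_j).
have := mdeg_compl m' sq'; rewrite mdegD mdeg1; lia.
Qed.

Lemma ballot_extend m K : msqfree m -> ballot m -> (mdeg m <= K)%N -> (2 * K <= n.+1)%N ->
  exists m', [/\ (m <= m')%MM, msqfree m', ballot m' & mdeg m' = K].
Proof.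
move=> sq bal le_mK K_half; have [k gap] : exists k, (K - mdeg m)%N = k by eexists.
elim: k m sq bal le_mK gap => [|k IH] m sq bal le_mK gap.
  by exists m; split=> //; [exact: lepm_refl | lia].
have [|m1 [le_m1 sq1 bal1 deg1]] := ballot_extend1 m sq bal; first lia.
have [||m2 [le_m2 sq2 bal2 deg2]] := IH m1 sq1 bal1; try lia.
by exists m2; split=> //; apply: lepm_trans le_m2.
Qed.

End Multinomials.

Section Polynomials.
Context {R : comNzRingType} {n : nat}.
Local Notation P := {mpoly R[n]}.
Implicit Types (p q : P) (m u T : 'X_{1..n}) (V : pred 'I_n).

Lemma mcoeffMX_if p u m : (p * 'X_[u])@_m = if (u <= m)%MM then p@_(m - u) else 0.
Proof.
case: ifP => [le_um|not_le]; first by rewrite -{1}(submK le_um) addmC mcoeffMX.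
apply/memN_msupp_eq0; rewrite (perm_mem (msuppMX p u)).
apply/negP=> /mapP [m' _ m_eq]; move/negP: not_le; apply.
by rewrite m_eq lem_addr.
Qed.

Definition sumX V : P := \sum_(i | V i) 'X_i.

Lemma mcoeff_sumXM V q m : (sumX V * q)@_m =
  \sum_(i | V i) (if (U_(i) <= m)%MM then q@_(m - U_(i)) else 0).
Proof.
rewrite /sumX mulr_suml raddf_sum /=; apply: eq_bigr => i _.
by rewrite mulrC mcoeffMX_if.
Qed.

Lemma msupp_sumX_exp V k m : m \in msupp (sumX V ^+ k) ->
  mdeg m = k /\ forall i, m i != 0%N -> V i.
Proof.
elim: k m => [|k IH] m.
  by rewrite expr0 -mpolyC1 msupp1 mem_seq1 => /eqP ->; split=> [|i]; rewrite ?mdeg0 ?mnm0E.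
rewrite exprS mcoeff_msupp mcoeff_sumXM => nz_sum.
have [i /andP [Vi]] : exists i, V i && ((if (U_(i) <= m)%MM then
    (sumX V ^+ k)@_(m - U_(i)) else 0) != 0).
  apply/existsP; apply: contraR nz_sum => /existsPn all0; apply/eqP/big1 => i Vi.
  by apply/eqP; move: (all0 i); rewrite Vi negbK.
case: ifP => [le_im|]; last by rewrite eqxx.
rewrite -mcoeff_msupp => /IH [deg_m supp_m]; rewrite -(submK le_im) mdegD mdeg1 deg_m addn1.
split=> // j; rewrite mnmDE mnm1E; case: (eqVneq i j) => [<- //|_].
by rewrite addn0; apply: supp_m.
Qed.

(* One term for each ordering of the k variables of T. *)
Lemma mcoeff_sumX_exp V k T : msqfree T -> mdeg T = k -> (forall i, T i != 0%N -> V i) ->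
  (sumX V ^+ k)@_T = (k`!)%:R.
Proof.
elim: k T => [|k IH] T sq deg_T supp_T.
  by move/eqP: deg_T; rewrite mdeg_eq0 => /eqP ->; rewrite expr0 mcoeff1 eqxx.
rewrite exprS mcoeff_sumXM.
rewrite (eq_bigr (fun i => (T i * k`!)%:R)) => [|i Vi]; last first.
  rewrite lep1mP; case: (msqfree01 sq i) => T_i; rewrite T_i ?mul0n //= mul1n.
  have le_iT : (U_(i) <= T)%MM by rewrite lep1mP T_i.
  apply: IH.
  - by apply/forallP => j; rewrite mnmBE (leq_trans (leq_subr _ _)) //; apply: (forallP sq).
  - by move: deg_T; rewrite -{1}(submK le_iT) mdegD mdeg1 addn1 => -[].
  - by move=> j; rewrite mnmBE => nz_j; apply: supp_T; apply: contra nz_j => /eqP ->.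
rewrite -natr_sum -big_distrl /= factS -deg_T mdegE [in RHS](bigID V) /=.
rewrite [X in (_ + X)%N]big1 ?addn0 // => i not_Vi.
by apply/eqP/negPn; apply: contra (supp_T i) not_Vi.
Qed.

Definition sqfree_part p : P := \sum_(m <- msupp p | msqfree m) p@_m *: 'X_[m].

Lemma msupp_sqfree_part p m : (m \in msupp (sqfree_part p)) = (m \in msupp p) && msqfree m.
Proof.
rewrite /sqfree_part -big_filter (perm_mem (msupp_sumX _ _)) ?mem_filter 1?andbC //.
  by rewrite filter_uniq // msupp_uniq.
by move=> m'; rewrite mem_filter -mcoeff_msupp => /andP [].
Qed.

Lemma sqfree_partE p :
  p = sqfree_part p + \sum_(m <- msupp p | ~~ msqfree m) p@_m *: 'X_[m].
Proof. by rewrite {1}[p]mpolyE (bigID msqfree). Qed.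

End Polynomials.

Section InitialIdeal.
Context {F : fieldType} {n : nat}.
Local Notation P := {mpoly F[n]}.
Variable I : P -> Prop.

Lemma lead_mono_dvd_initial {f m s} : I f -> f != 0 -> is_lead_mono f m -> (m <= s)%MM ->
  initial_ideal I 'X_[s].
Proof.
move=> If nz lead le_ms; exists 1%N, (fun=> 'X_[s - m]), (fun=> 'X_[m]); split.
  by move=> _; exists f, m.
by rewrite big_ord1 -mpolyXD submK.
Qed.

Lemma initial_idealX m : I 'X_[m] -> initial_ideal I 'X_[m].
Proof.
have supp_m : m \in msupp ('X_[m] : P) by rewrite msuppX mem_seq1.
move=> Im; apply: (lead_mono_dvd_initial Im _ _ (lepm_refl m)).
  by apply: contraTneq supp_m => ->; rewrite msupp0.
by split=> // m'; rewrite msuppX mem_seq1 => /eqP ->; left.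
Qed.

Lemma notin_initial_idealX s :
  (forall f m, I f -> f != 0 -> is_lead_mono f m -> ~~ (m <= s)%MM) ->
  ~ initial_ideal I 'X_[s].
Proof.
move=> no_lead [k [c [g [gen_g eq_s]]]].
have : ('X_[s] : P)@_s = 0.
  rewrite eq_s raddf_sum big1 // => i _ /=.
  have [f [m [If [nz [lead ->]]]]] := gen_g i.
  by rewrite mcoeffMX_if (negbTE (no_lead _ _ If nz lead)).
by rewrite mcoeffX eqxx => /eqP; rewrite oner_eq0.
Qed.

(* Apply phi to x^(s - m) f, whose leading monomial is s. *)
Lemma notin_initial_ideal_scalar (phi : {scalar P}) s :
  (forall u f, I f -> I ('X_[u] * f)) -> (forall f, I f -> phi f = 0) ->
  phi 'X_[s] != 0 -> (forall m, revlex_lt m s -> phi 'X_[m] = 0) ->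
  ~ initial_ideal I 'X_[s].
Proof.
move=> I_mulX phi_I phi_s phi_lt; apply: notin_initial_idealX => f m If _ [f_m lead].
apply/negP => le_ms; have := phi_I _ (I_mulX (s - m)%MM f If).
rewrite {1}[f]mpolyE mulr_sumr linear_sum (bigD1_seq m) ?msupp_uniq //=.
rewrite -scalerAr -mpolyXD submK // linearZ /= big1_seq ?addr0 => [|m' /andP [ne_m' supp_m']].
  by apply/eqP; rewrite mulf_neq0 // -mcoeff_msupp.
rewrite -scalerAr -mpolyXD linearZ /= phi_lt ?mulr0 //.
have [eq_m'|lt_m'] := lead m' supp_m'; first by rewrite eq_m' eqxx in ne_m'.
by rewrite -[s in revlex_lt _ s](submK le_ms); apply: revlex_ltD2l.
Qed.

End InitialIdeal.

Section IdealIn.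
Context {F : fieldType} {n : nat}.
Local Notation P := {mpoly F[n]}.
Local Notation J := (@ideal_In F n).
Implicit Types (p q x y : P) (m T : 'X_{1..n}) (V : pred 'I_n).

Lemma ideal_In0 : J 0.
Proof. by exists (fun=> 0), 0; rewrite big1 ?mul0r ?addr0 // => i _; rewrite mul0r. Qed.

Lemma ideal_InD p q : J p -> J q -> J (p + q).
Proof.
move=> [g1 [h1 ->]] [g2 [h2 ->]]; exists (fun i => g1 i + g2 i), (h1 + h2).
rewrite mulrDl addrACA -big_split /=; congr (_ + _).
by apply: eq_bigr => i _; rewrite mulrDl.
Qed.

Lemma ideal_InMl q p : J p -> J (q * p).
Proof.
move=> [g [h ->]]; exists (fun i => q * g i), (q * h).
by rewrite mulrDr mulr_sumr mulrA; congr (_ + _); apply: eq_bigr => i _; rewrite mulrA.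
Qed.

Lemma ideal_InB p q : J p -> J q -> J (p - q).
Proof. by move=> Jp Jq; rewrite -mulN1r; apply/ideal_InD/ideal_InMl. Qed.

Lemma ideal_InZ c p : J p -> J (c *: p).
Proof. by rewrite -mul_mpolyC; apply: ideal_InMl. Qed.

Lemma ideal_In_sum (I : Type) (r : seq I) (Q : pred I) (G : I -> P) :
  (forall i, Q i -> J (G i)) -> J (\sum_(i <- r | Q i) G i).
Proof.
move=> JG; apply: big_rec => [|i p Qi]; first exact: ideal_In0.
exact: ideal_InD (JG i Qi).
Qed.

Lemma ideal_In_Xsq i : J ('X_i ^+ 2).
Proof.
exists (fun j => (j == i)%:R), 0; rewrite mul0r addr0 (bigD1 i) //= eqxx mul1r.
by rewrite big1 ?addr0 // => j /negbTE ->; rewrite mul0r.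
Qed.

Lemma ideal_In_sumXsq : J ((\sum_(i < n) 'X_i) ^+ 2).
Proof.
exists (fun=> 0), 1.
by rewrite mul1r [X in _ = X + _]big1 ?add0r // => i _; rewrite mul0r.
Qed.

Lemma ideal_In_nsqfree m : ~~ msqfree m -> J 'X_[m].
Proof.
move=> /forallPn [i]; rewrite -ltnNge => lt1_mi.
have le_im : (U_(i) *+ 2 <= m)%MM.
  by apply/mnm_lepP => j; rewrite mulmnE mnm1E; case: eqP => [<-|].
by rewrite -(submK le_im) mpolyXD -mpolyXn; apply/ideal_InMl/ideal_In_Xsq.
Qed.

Lemma ideal_In_exprD x y a b N : J (x ^+ a) -> J (y ^+ b) -> (a + b <= N.+1)%N ->
  J ((x + y) ^+ N).
Proof.
move=> Jx Jy le_abN; rewrite exprDn; apply: ideal_In_sum => k _.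
rewrite -mulr_natl; apply: ideal_InMl.
have [le_bk|lt_kb] := leqP b k.
  by rewrite -(subnK le_bk) exprD mulrA; apply: ideal_InMl.
have le_aNk : (a <= N - k)%N by move: (ltn_ord k); lia.
by rewrite mulrC -(subnK le_aNk) exprD mulrA; apply: ideal_InMl.
Qed.

Lemma ideal_In_sumX_seq (s : seq 'I_n) N : (size s < N)%N ->
  J ((\sum_(i <- s) 'X_i) ^+ N).
Proof.
elim: s N => [|i s IH] N lt_sN.
  by rewrite big_nil expr0n eqn0Ngt lt_sN; exact: ideal_In0.
rewrite big_cons; apply: (ideal_In_exprD _ _ 2 (size s).+1).
- exact: ideal_In_Xsq.
- exact: IH.
- by move: lt_sN => /=; lia.
Qed.

Lemma ideal_In_sumX V k : (#|predC V| + 2 <= k)%N -> J (sumX V ^+ k).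
Proof.
move=> le_k.
have -> : sumX V = \sum_(i < n) 'X_i - \sum_(i | ~~ V i) 'X_i :> P.
  by rewrite (bigID V) /= addrK.
apply: (ideal_In_exprD _ _ 2 #|predC V|.+1); first exact: ideal_In_sumXsq.
  have <- : \sum_(i <- enum (predC V)) 'X_i = \sum_(i | ~~ V i) 'X_i :> P.
    by rewrite big_enum; apply: eq_bigl => i; rewrite inE.
  by rewrite exprNn; apply/ideal_InMl/ideal_In_sumX_seq; rewrite cardE.
lia.
Qed.

Lemma ideal_In_sqfree_part p : J p -> J (sqfree_part p).
Proof.
move=> Jp; rewrite (canRL (addrK _) (esym (sqfree_partE p))).
apply: ideal_InB => //; apply: ideal_In_sum => m nsq.
exact/ideal_InZ/ideal_In_nsqfree.
Qed.

(* If the prefix below t is too dense, the part T of mu below t is the leading monomial of the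
   squarefree part of (sum_{i in V} x_i)^deg T, where V omits the zeros of mu below t. *)
Lemma nonballot_initial (charF0 : [pchar F] =i pred0) {mu t} : msqfree mu ->
  (t.+1 < 2 * prefix_deg mu t)%N -> initial_ideal J 'X_[mu].
Proof.
move=> sq dense; set j := prefix_deg mu t.
pose V : pred 'I_n := fun i => (t <= i)%N || (mu i != 0%N).
pose T := [multinom (if (i < t)%N then mu i else 0%N) | i < n].
have TE i : T i = if (i < t)%N then mu i else 0%N by rewrite mnmE.
have le_Tmu : (T <= mu)%MM by apply/mnm_lepP => i; rewrite TE; case: ifP.
have sqT : msqfree T.
  by apply/forallP => i; rewrite TE; case: ifP => // _; apply: (forallP sq).
have degT : mdeg T = j.
  by rewrite /j prefix_degE mdegE [RHS]big_mkcond; apply: eq_bigr => i _; rewrite TE.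
have suppT i : T i != 0%N -> V i by rewrite TE /V; case: ifP => // _ ->; rewrite orbT.
have card_notV : (#|predC V| + 2 <= j)%N.
  have -> : #|predC V| = prefix_deg (mcompl mu) t.
    rewrite prefix_degE -sum1_card big_mkcond [RHS]big_mkcond /=; apply: eq_bigr => i _.
    rewrite !inE /V negb_or -ltnNge negbK mcomplE.
    by case: (i < t)%N => //=; case: (msqfree01 sq i) => ->.
  by have := prefix_deg_compl mu t sq; rewrite -/j; lia.
pose f : P := sqfree_part (sumX V ^+ j).
have T_f : T \in msupp f.
  rewrite msupp_sqfree_part sqT andbT mcoeff_msupp mcoeff_sumX_exp //.
  by move/pcharf0P: charF0 => ->; rewrite -lt0n fact_gt0.
apply: (lead_mono_dvd_initial (f := f) _ _ _ _ le_Tmu).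
- exact/ideal_In_sqfree_part/ideal_In_sumX.
- by apply: contraTneq T_f => ->; rewrite msupp0.
split=> // m; rewrite msupp_sqfree_part => /andP [/msupp_sumX_exp [deg_m supp_m] sq_m].
have [<-|ne_mT] := eqVneq m T; [by left | right].
apply: (revlex_lt_dominated t ne_mT) => [|i|i lt_it]; first by rewrite deg_m degT.
  by rewrite TE leqNgt => /negbTE ->.
rewrite TE lt_it; case: (msqfree01 sq_m i) => [-> //|m_i].
by have := supp_m i; rewrite m_i /V leqNgt lt_it lt0n => /(_ isT).
Qed.

End IdealIn.

Section Certificate.
Context {F : fieldType} {n : nat}.
Local Notation P := {mpoly F[n]}.
Implicit Types (m : 'X_{1..n}) (i j r b : 'I_n).
Variable S : 'X_{1..n}.
Hypotheses (S_sqfree : msqfree S) (S_ballot : ballot S).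
Hypotheses (S_deg_gt0 : (0 < mdeg S)%N) (S_deg_half : (2 * mdeg S <= n)%N).

Local Notation ones_before := (prefix_deg S).
Local Notation zeros_before := (prefix_deg (mcompl S)).

Lemma S01 i : S i = 0%N \/ S i = 1%N.
Proof. exact: msqfree01. Qed.

Lemma mcomplS i : (mcompl S i != 0%N) = (S i == 0%N).
Proof. by rewrite mcomplE; case: (S01 i) => ->. Qed.

Definition partner (b : 'I_n) : option 'I_n :=
  if S b == 0%N then [pick r | (S r == 1%N) && (ones_before r == (zeros_before b).+1)]
  else None.

Lemma partner_spec {b r} : partner b = Some r ->
  [/\ S b = 0%N, S r = 1%N, ones_before r = (zeros_before b).+1 & (b < r)%N].
Proof.
rewrite /partner; case: eqP => // S_b; case: pickP => // r' /andP [/eqP S_r' /eqP ob_r'] [<-].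
split=> //; have [//|le_r'b] := ltnP b r'; exfalso.
have lt_r'b : (r' < b)%N.
  rewrite ltn_neqAle le_r'b andbT; apply/eqP => /val_inj eq_r'b.
  by move: S_r'; rewrite eq_r'b S_b.
have S_r'_nz : S r' != 0%N by rewrite S_r'.
have := prefix_deg_ltS S_r'_nz lt_r'b.
have := prefix_deg_compl S b S_sqfree; have := S_ballot b; have := ltn_ord b; lia.
Qed.

Lemma partner_of {b r} : S b = 0%N -> S r = 1%N -> ones_before r = (zeros_before b).+1 ->
  partner b = Some r.
Proof.
move=> S_b S_r ob_r; rewrite /partner S_b eqxx.
case: pickP => [r' /andP [/eqP S_r' /eqP ob_r'] | none]; last first.
  by move: (none r); rewrite S_r ob_r !eqxx.
by congr Some; apply: (prefix_deg_inj S); rewrite ?S_r ?S_r' ?ob_r ?ob_r'.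
Qed.

Definition subst_index (i : 'I_n) : 'I_n := odflt i (partner i).

Definition subst_coef (i : 'I_n) : F := if partner i is Some _ then -1 else (S i)%:R.

Definition subst_var (i : 'I_n) : P := subst_coef i *: 'X_(subst_index i).

Lemma subst_index_inj : {in [set b | partner b != None] &, injective subst_index}.
Proof.
move=> b1 b2; rewrite !inE /subst_index.
case p1: (partner b1) => [r1|] // _; case p2: (partner b2) => [r2|] //= _ eq_r.
have [S_b1 _ ob_r1 _] := partner_spec p1; have [S_b2 _ ob_r2 _] := partner_spec p2.
apply: (prefix_deg_inj (mcompl S)); rewrite ?mcomplS ?S_b1 ?S_b2 //.
by apply: succn_inj; rewrite -ob_r1 -ob_r2 eq_r.
Qed.

Lemma subst_index_image : subst_index @: [set b | partner b != None] =
  [set r | (S r == 1%N) && (ones_before r != 0%N)].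
Proof.
apply/setP => r; rewrite !inE; apply/imsetP/andP => [[b] | [/eqP S_r ob_r]].
  rewrite inE /subst_index; case p_b: (partner b) => [r'|] //= _ ->.
  by have [_ -> -> _] := partner_spec p_b.
have [|b [S'_b zb]] :=
  @prefix_deg_attained _ (mcompl S) (ones_before r).-1 (msqfree_compl S).
  have S_r_nz : S r != 0%N by rewrite S_r.
  have := prefix_deg_ltS S_r_nz (ltn_ord r); rewrite prefix_deg_mdeg.
  have := mdeg_compl S S_sqfree; lia.
have S_b : S b = 0%N by apply/eqP; rewrite -mcomplS S'_b.
have p_b : partner b = Some r by apply: partner_of; rewrite // zb prednK // lt0n.
by exists b; rewrite ?inE /subst_index p_b.
Qed.

Lemma subst_varE i :
  subst_var i = (S i)%:R *: 'X_i - (if partner i is Some r then 'X_r else 0).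
Proof.
rewrite /subst_var /subst_coef /subst_index.
case p_i: (partner i) => [r|] /=; last by rewrite subr0.
by have [-> _ _ _] := partner_spec p_i; rewrite scale0r sub0r scaleN1r.
Qed.

(* The partners are exactly the variables of S other than the first, so all but the first cancel. *)
Lemma sum_subst_var : exists r0, \sum_i subst_var i = 'X_r0.
Proof.
have [r0 [S_r0 ob_r0]] := prefix_deg_attained S 0 S_sqfree S_deg_gt0; exists r0.
rewrite (eq_bigr _ (fun i _ => subst_varE i)) sumrB.
have -> : \sum_i (S i)%:R *: 'X_i = \sum_(r | S r == 1%N) 'X_r :> P.
  rewrite [RHS]big_mkcond; apply: eq_bigr => i _.
  by case: (S01 i) => ->; rewrite ?scale0r ?scale1r.
have -> : \sum_i (if partner i is Some r then 'X_r else 0) =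
    \sum_(r | (S r == 1%N) && (ones_before r != 0%N)) 'X_r :> P.
  rewrite [RHS](eq_bigl (mem [set r | (S r == 1%N) && (ones_before r != 0%N)]))
    => [|r]; last by rewrite !inE.
  rewrite -subst_index_image big_imset /=; last exact: subst_index_inj.
  rewrite big_mkcond [RHS]big_mkcond; apply: eq_bigr => i _.
  by rewrite inE /subst_index; case: (partner i).
rewrite (bigID (fun r : 'I_n => ones_before r == 0%N)) /= addrK (big_pred1 r0) // => r.
apply/andP/eqP => [[/eqP S_r /eqP ob_r] | ->]; last by rewrite S_r0 ob_r0.
by apply: (prefix_deg_inj S); rewrite ?S_r ?S_r0 ?ob_r ?ob_r0.
Qed.

Definition subst : n.-tuple P := [tuple subst_var i | i < n].

Definition cert_form : {scalar P} := mcoeff S \o comp_mpoly subst.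

Lemma comp_substX i : 'X_i \mPo subst = subst_var i.
Proof. by rewrite comp_mpolyXU -tnth_nth tnth_mktuple. Qed.

Lemma mcoeffS_MXsq (q : P) (r : 'I_n) : (q * 'X_r ^+ 2)@_S = 0.
Proof.
rewrite mpolyXn mcoeffMX_if; case: ifP => // /mnm_lepP/(_ r).
by rewrite mulmnE mnm1E eqxx mul1n; case: (S01 r) => ->.
Qed.

Lemma cert_form_ideal_In p : ideal_In p -> cert_form p = 0.
Proof.
have [r0 sum_r0] := sum_subst_var.
move=> [g [h ->]]; rewrite /cert_form /= raddfD /= rmorphM rmorphXn.
rewrite [in X in _ * X]rmorph_sum /=.
rewrite (eq_bigr _ (fun i _ => comp_substX i)) sum_r0 mcoeffD mcoeffS_MXsq addr0.
rewrite rmorph_sum raddf_sum big1 //= => i _.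
rewrite rmorphM rmorphXn /= comp_substX /subst_var exprZn -scalerAr mcoeffZ.
by rewrite mcoeffS_MXsq mulr0.
Qed.

Definition subst_mnm (m : 'X_{1..n}) := (\sum_(i < n) U_(subst_index i) *+ m i)%MM.

Lemma mdeg_subst_mnm m : mdeg (subst_mnm m) = mdeg m.
Proof.
rewrite /subst_mnm (big_morph _ mdegD mdeg0) mdegE.
by apply: eq_bigr => i _; rewrite mdegMn mdeg1 mul1n.
Qed.

Lemma subst_mnmE m r : subst_mnm m r = (\sum_(i < n) (subst_index i == r) * m i)%N.
Proof. by rewrite mnm_sumE; apply: eq_bigr => i _; rewrite mulmnE mnm1E. Qed.

Lemma cert_formX m : cert_form 'X_[m] = (\prod_i subst_coef i ^+ m i) * (subst_mnm m == S)%:R.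
Proof.
rewrite /cert_form /= comp_mpolyX.
rewrite (eq_bigr (fun i => subst_coef i ^+ m i *: 'X_[U_(subst_index i) *+ m i])); last first.
  by move=> i _; rewrite tnth_mktuple /subst_var exprZn mpolyXn.
rewrite scaler_prod mcoeffZ -(big_morph _ (@mpolyXD n F) (@mpolyX0 n F)) mcoeffX.
by rewrite eq_sym.
Qed.

Lemma cert_formXS : cert_form 'X_[S] = 1.
Proof.
rewrite /cert_form /=; suff -> : 'X_[S] \mPo subst = 'X_[S] by rewrite mcoeffX eqxx.
rewrite -[RHS]comp_mpoly_id !comp_mpolyX; apply: eq_bigr => i _; rewrite !tnth_mktuple.
case: (S01 i) => S_i; rewrite S_i ?expr0 // !expr1 /subst_var /subst_coef /subst_index.
by rewrite /partner S_i /= scale1r.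
Qed.

Lemma leq_subst_mnm m i : (m i <= subst_mnm m (subst_index i))%N.
Proof. by rewrite subst_mnmE (bigD1 i) //= eqxx mul1n leq_addr. Qed.

Lemma leq_subst_mnm2 m {i j} : i != j -> subst_index i = subst_index j ->
  (m i + m j <= subst_mnm m (subst_index j))%N.
Proof.
move=> ne_ij eq_ij; rewrite subst_mnmE (bigD1 i) //= (bigD1 j) /=; last by rewrite eq_sym ne_ij.
by rewrite eq_ij eqxx !mul1n addnA leq_addr.
Qed.

(* At the last index i where m and S differ, the image of x^m has exponent > 1 at the
   image of x_i. *)
Lemma cert_formX_revlex m : revlex_lt m S -> cert_form 'X_[m] = 0.
Proof.
rewrite cert_formX; have [eq_mS|] := eqVneq (subst_mnm m) S; last by rewrite mulr0.
have [->|/prodf_neq0 nz] := eqVneq (\prod_i subst_coef i ^+ m i) 0; first by rewrite mul0r.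
case=> [|[_ [i [lt_i above]]]]; first by rewrite -eq_mS mdeg_subst_mnm ltnn.
exfalso; case: (S01 i) => S_i; rewrite S_i in lt_i; last first.
  have := leq_subst_mnm m i; rewrite /subst_index /partner S_i /= eq_mS S_i; lia.
have : subst_coef i != 0.
  by apply: contraNneq (nz i isT) => ->; rewrite expf_eq0 eqxx andbT.
rewrite /subst_coef; case p_i: (partner i) => [r|]; last by rewrite S_i eqxx.
have [_ S_r _ lt_ir] := partner_spec p_i.
have sigma_r : subst_index r = r by rewrite /subst_index /partner S_r.
have sigma_i : subst_index i = r by rewrite /subst_index p_i.
have ne_ir : i != r by apply: contraTneq lt_ir => ->; rewrite ltnn.
have := leq_subst_mnm2 m ne_ir (etrans sigma_i (esym sigma_r)).
by rewrite sigma_r eq_mS S_r (above r lt_ir) S_r => le_1 _; lia.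
Qed.

Lemma ballot_notin_initial : ~ initial_ideal (@ideal_In F n) 'X_[S].
Proof.
apply: (notin_initial_ideal_scalar _ cert_form) => [u f|f||m]; first exact: ideal_InMl.
- exact: cert_form_ideal_In.
- by rewrite cert_formXS oner_neq0.
- exact: cert_formX_revlex.
Qed.

End Certificate.

Theorem mainTheorem7 (F : fieldType) (charF0 : [pchar F] =i pred0)
  (d : nat) (hd : (2 <= d)%N) (mu : 'X_{1..(2 * d - 2)}) :
  (mdeg mu <= d - 2)%N ->
  ~ initial_ideal (@ideal_In F (2 * d - 2)) 'X_[mu] ->
  exists mu' : 'X_{1..(2 * d - 2)},
    (mu <= mu')%MM /\ mdeg mu' = (d - 1)%N /\
    ~ initial_ideal (@ideal_In F (2 * d - 2)) 'X_[mu'].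
Proof.
move=> deg_mu mu_notin.
have sq : msqfree mu.
  by apply: contraT => /ideal_In_nsqfree /initial_idealX /mu_notin.
have bal : ballot mu.
  move=> t; rewrite leqNgt; apply/negP => dense.
  exact: mu_notin (nonballot_initial charF0 sq dense).
have [||mu' [le_mu' sq' bal' deg_mu']] := ballot_extend mu (d - 1) sq bal; try lia.
exists mu'; do !split=> //; apply: ballot_notin_initial => //; lia.
Qed.
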